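(* Let $(A,\mathfrak{g},\omega)$ be an $n$-plectic structure and $f_1,f_2\in\mathcal{P}ois(A,\mathfrak{g},\omega)$. Then $\{f_1,f_2\}$ is a well defined Poisson cotensor (independent of the choice of associated Hamilton tensors). If $x_1,x_2$ and $y_1,y_2$ are (homogeneous) tensors with $i_{x_i}\omega=df_i$ and $i_{y_i}\omega=f_i$, then the tensor $$y_{\{f_1,f_2\}}=[x_2,y_1]-(-1)^{(|x_1|-1)(|x_2|-1)}[x_1,y_2]$$ satisfies $i_{y_{\{f_1,f_2\}}}\omega=\{f_1,f_2\}$, and the tensor $$x_{\{f_1,f_2\}}:=[x_2,x_1]-(-1)^{(|x_1|-1)(|x_2|-1)}[x_1,x_2]$$ satisfies $i_{x_{\{f_1,f_2\}}}\omega=d\{f_1,f_2\}$.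
   Context: A Lie Rinehart pair $(A,\mathfrak{g})$: $A$ a commutative associative unital $\mathbb{R}$-algebra, $\mathfrak{g}$ a real Lie algebra that is an $A$-module, with a Lie algebra morphism $D:\mathfrak{g}\to\mathrm{Der}(A)$ such that $[x,ay]=D_x(a)y+a[x,y]$; torsionless means $\mathfrak{g}\to\mathfrak{g}^{\vee\vee}$ ($\mathfrak{g}^\vee=\mathrm{Hom}_A(\mathfrak{g},A)$) is injective. Tensors $X(\mathfrak{g},A)=\bigoplus_k\Lambda^k_A\mathfrak{g}$, cotensors $\Omega(\mathfrak{g},A)=\bigoplus_k\Lambda^k_A\mathfrak{g}^\vee$; tensor grading $|x|=k$ for $x\in\Lambda^k_A\mathfrak{g}$, $|f|=-k$ for $f\in\Lambda^k_A\mathfrak{g}^\vee$. Right contraction: $\langle i_xf,z\rangle=\langle f,x\wedge z\rangle$ for all tensors $z$, with $\langle\cdot,\cdot\rangle$ the natural determinant pairing. De Rham differential: $df(x_0\wedge\cdots\wedge x_k)=\sum_j(-1)^jD_{x_j}(f(\cdots\widehat{x_j}\cdots))+\sum_{i<j}(-1)^{i+j}f([x_i,x_j]\wedge\cdots\widehat{x_i}\cdots\widehat{x_j}\cdots)$. Lie derivative along homogeneous tensor $x$: $L_xf=di_xf-(-1)^{|x|}i_xdf$. Schouten–Nijenhuis bracket on $X(\mathfrak{g},A)$: $[a,b]=0$, $[x,a]=[a,x]=D_x(a)$ for $a,b\in A$, $x\in\mathfrak{g}$, the Lie bracket on $\mathfrak{g}$, and $[x_1\wedge\cdots\wedge x_p,y_1\wedge\cdots\wedge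 y_q]=\sum_{i,j}(-1)^{i+j}[x_i,y_j]\wedge x_1\wedge\cdots\widehat{x_i}\cdots\wedge x_p\wedge y_1\wedge\cdots\widehat{y_j}\cdots\wedge y_q$, extended additively. An $n$-plectic structure is a torsionless Lie Rinehart pair with $\omega\in\Lambda^{n+1}_A\mathfrak{g}^\vee$, $d\omega=0$. A Poisson cotensor is a cotensor $f$ admitting tensors $x$ with $i_x\omega=df$ (Hamilton tensor) and $y$ with $i_y\omega=f$ (Poisson constraint); $\mathcal{P}ois(A,\mathfrak{g},\omega)$ is their set. The homotopy Poisson 2-bracket is defined for homogeneous $f_1,f_2\in\mathcal{P}ois(A,\mathfrak{g},\omega)$ with associated homogeneous Hamilton tensors $x_1,x_2$ by $\{f_1,f_2\}=-L_{x_1}f_2+(-1)^{(|x_1|-1)(|x_2|-1)}L_{x_2}f_1$, and extended by linearity. *)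

From HB Require Import structures.
From mathcomp Require Import all_boot all_order all_algebra.
From mathcomp Require Import reals.
Set Implicit Arguments. Unset Strict Implicit. Unset Printing Implicit Defensive.
Import Order.TTheory GRing.Theory Num.Theory.
Local Open Scope ring_scope.

Section LieRinehart.
Variables (R : realType) (A : comAlgType R) (g : lmodType A).

(* (A, g) with bracket [br] and anchor [D] is a Lie-Rinehart pair:
   g is a real Lie algebra (real scalars act through r%:A), D is an
   A-linear Lie algebra morphism into the R-linear derivations of A,
   and the Leibniz rule [x, a y] = D_x(a) y + a [x, y] holds. *)
Record lie_rinehart (br : g -> g -> g) (D : g -> A -> A) : Prop := {
  lr_brDl : forall x y z, br (x + y) z = br x z + br y z;
  lr_brDr : forall x y z, br x (y + z) = br x y + br x z;
  lr_brZl : forall (r : R) x y, br (r%:A *: x) y = r%:A *: br x y;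
  lr_brZr : forall (r : R) x y, br x (r%:A *: y) = r%:A *: br x y;
  lr_br_alt : forall x, br x x = 0;
  lr_jacobi : forall x y z, br x (br y z) + br y (br z x) + br z (br x y) = 0;
  lr_D_lin : forall (a : A) x y b, D (a *: x + y) b = a * D x b + D y b;
  lr_D_add : forall x b c, D x (b + c) = D x b + D x c;
  lr_D_scale : forall x (r : R) b, D x (r *: b) = r *: D x b;
  lr_D_mul : forall x b c, D x (b * c) = b * D x c + D x b * c;
  lr_D_br : forall x y b, D (br x y) b = D x (D y b) - D y (D x b);
  lr_leibniz : forall x (a : A) y, br x (a *: y) = D x a *: y + a *: br x y
}.

Definition Alinear (phi : g -> A) : Prop :=
  forall (a : A) u v, phi (a *: u + v) = a * phi u + phi v.

Definition torsionless : Prop :=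
  forall x : g, (forall phi : g -> A, Alinear phi -> phi x = 0) -> x = 0.

Record dual := Dual { dval :> g -> A; dvalP : Alinear dval }.

Lemma Alinear0 : Alinear (fun _ => 0).
Proof. by move=> a u v; rewrite mulr0 addr0. Qed.
Definition dual0 : dual := Dual Alinear0.

(* Tensors: formal A-linear combinations of words x_1 /\ ... /\ x_k
   (representatives of elements of X(g,A) = (+)_k Lambda^k_A g). *)
Definition tensor := seq (A * seq g).
(* Cotensors: formal A-linear combinations of words f_1 /\ ... /\ f_k,
   f_i in g^vee (representatives of elements of (+)_k Lambda^k_A g^vee). *)
Definition cotensor := seq (A * seq dual).

Definition homog {T} (k : nat) (s : seq (A * seq T)) : bool :=
  all (fun p => size p.2 == k) s.

(* Cotensors are observed through the determinant pairing with tensors: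
   a functional on words of g (the word x_1..x_k stands for x_1/\../\x_k). *)
Definition functional := seq g -> A.

Definition cot_eval (s : cotensor) : functional := fun xs =>
  \sum_(p <- s | size p.2 == size xs)
     p.1 * \det (\matrix_(i < size xs, j < size xs)
                   (nth dual0 p.2 i) (nth 0 xs j)).

Definition drop_at {T} (i : nat) (s : seq T) := take i s ++ drop i.+1 s.

Variables (br : g -> g -> g) (D : g -> A -> A).

Definition ictr (x : tensor) (F : functional) : functional := fun zs =>
  \sum_(p <- x) p.1 * F (p.2 ++ zs).

Definition deR (F : functional) : functional := fun xs =>
  \sum_(j < size xs) (-1) ^+ j * D (nth 0 xs j) (F (drop_at j xs)) +
  \sum_(i < size xs) \sum_(j < size xs | (i < j)%N)
     (-1) ^+ (i + j) * F (br (nth 0 xs i) (nth 0 xs j)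
                             :: drop_at i (drop_at j xs)).

Definition lieD (x : tensor) (k : nat) (F : functional) : functional :=
  fun zs => deR (ictr x F) zs - (-1) ^+ k * ictr x (deR F) zs.

(* the sign (-1)^((k1-1)(k2-1)) *)
Definition psign (k1 k2 : nat) : A := (-1) ^+ (k1.+1 * k2.+1).

Definition pbr (x1 : tensor) (k1 : nat) (x2 : tensor) (k2 : nat)
  (F1 F2 : functional) : functional := fun zs =>
  - lieD x1 k1 F2 zs + psign k1 k2 * lieD x2 k2 F1 zs.

(* Schouten-Nijenhuis bracket on representatives. A term (a, x1::r) is the
   word (a x1) /\ r; a term (a, [::]) is the scalar a. *)
Definition absorb (a : A) (w : seq g) : seq g :=
  if w is x :: r then (a *: x) :: r else w.

Definition sn_word (w1 w2 : seq g) : tensor :=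
  flatten (map (fun i => map (fun j => ((-1) ^+ (i + j),
                     br (nth 0 w1 i) (nth 0 w2 j) :: drop_at i w1 ++ drop_at j w2))
               (iota 0 (size w2))) (iota 0 (size w1))).

Definition sn_vs (w : seq g) (a : A) : tensor :=
  [seq ((-1) ^+ (size w - i.+1) * D (nth 0 w i) a, drop_at i w)
  | i <- iota 0 (size w)].

Definition sn_sv (a : A) (w : seq g) : tensor :=
  [seq ((-1) ^+ j.+1 * D (nth 0 w j) a, drop_at j w) | j <- iota 0 (size w)].

Definition sn_term (p q : A * seq g) : tensor :=
  match p.2, q.2 with
  | [::], [::] => [::]
  | [::], _ => sn_sv p.1 (absorb q.1 q.2)
  | _, [::] => sn_vs (absorb p.1 p.2) q.1
  | _, _ => sn_word (absorb p.1 p.2) (absorb q.1 q.2)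
  end.

Definition schouten (s t : tensor) : tensor :=
  flatten (map (fun p => flatten (map (sn_term p) t)) s).

Definition tcomb (s : tensor) (c : A) (t : tensor) : tensor :=
  s ++ [seq (c * p.1, p.2) | p <- t].

End LieRinehart.

From mathcomp Require Import all_boot all_order all_algebra.
From mathcomp Require Import reals.
From mathcomp Require boolp.
From mathcomp Require Import ring zify.
From mathcomp Require Import fingroup perm.
Import Order.TTheory GRing.Theory Num.Theory.
Local Open Scope ring_scope.

Set Implicit Arguments.
Unset Strict Implicit.
Unset Printing Implicit Defensive.

(* Everything is Cartan calculus for functionals on words of g that are
   alternating and A-multilinear, as the functionals of cotensors are. With
   L_x = d i_x - (-1)^|x| i_x d, the Schouten bracket satisfies
   i_[x,y] = (-1)^((|x|-1)|y|) L_x i_y - i_y L_x, and d^2 = 0 makes L_x commute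
   with d up to sign. For a Hamilton tensor x of f, L_x ω = d i_x ω = d d f = 0
   since dω = 0; hence i_[x2,y1] ω = +-L_x2 i_y1 ω = +-L_x2 f1 and
   i_[x2,x1] ω = +-L_x2 d f1 = -+d L_x2 f1, which give the Poisson constraint
   and the Hamilton tensor of {f1,f2}. Since contractions graded-commute,
   L_x f2 = d i_y2 i_x ω +- i_x2 i_x ω only depends on i_x ω, whence the
   independence of the Hamilton tensors. Finally a contraction of a cotensor
   is a cotensor (Laplace expansion), so {f1,f2}, being a contraction of ω,
   is one. *)

(** * Alternating multilinear functionals *)

Section AlternatingForms.
Variables (R : realType) (A : comAlgType R) (g : lmodType A).

Local Notation fn := (functional g).

Lemma signS k : (-1) ^+ k.+1 = - (-1) ^+ k :> A.
Proof. by rewrite exprS mulN1r. Qed.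

Lemma sign_oddE k : (-1) ^+ k = (if odd k then -1 else 1) :> A.
Proof. by rewrite -signr_odd; case: (odd k). Qed.

Lemma sign_sq k : (-1) ^+ k * (-1) ^+ k = 1 :> A.
Proof. by rewrite -exprD -signr_odd addnn odd_double. Qed.

Lemma funE (F G : fn) : F =1 G -> F = G.
Proof. exact: boolp.funext. Qed.

Lemma drop_at0 T (x : T) xs : drop_at 0 (x :: xs) = xs.
Proof. by rewrite /drop_at /= drop0. Qed.

Lemma drop_atS T (x : T) xs j : drop_at j.+1 (x :: xs) = x :: drop_at j xs.
Proof. by []. Qed.

Lemma size_drop_at T (s : seq T) j : (j < size s)%N -> size (drop_at j s) = (size s).-1.
Proof. by move=> hj; rewrite /drop_at size_cat size_take size_drop hj; lia. Qed.

Lemma nth_drop_at T (x0 : T) s i a : (i < size s)%N ->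
  nth x0 (drop_at i s) a = nth x0 s (bump i a).
Proof.
move=> hi; rewrite /drop_at nth_cat size_take hi /bump.
case: (ltnP a i) => ha; first by rewrite nth_take // leqNgt ha.
by rewrite nth_drop; congr nth; lia.
Qed.

Lemma sum_iota (f : nat -> A) n : \sum_(i <- iota 0 n) f i = \sum_(i < n) f i.
Proof. by rewrite -(big_mkord xpredT) /index_iota subn0. Qed.

(* Functionals of cotensors are alternating and A-multilinear
   ([alt_form_cot_eval]); the calculus below uses nothing else about them. *)
Record alt_form (F : fn) : Prop := AltForm {
  alt_formA : forall pre u v r, F (pre ++ u :: v :: r) = - F (pre ++ v :: u :: r);
  alt_formL : forall pre a u v r,
    F (pre ++ (a *: u + v) :: r) = a * F (pre ++ u :: r) + F (pre ++ v :: r)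
}.

Section AltFormArithmetic.
Variable F : fn.
Hypothesis HF : alt_form F.

Lemma formD pre u v r : F (pre ++ (u + v) :: r) = F (pre ++ u :: r) + F (pre ++ v :: r).
Proof. by rewrite -{1}[u]scale1r (alt_formL HF) mul1r. Qed.

Lemma form0 pre r : F (pre ++ 0 :: r) = 0.
Proof. by apply: (addrI (F (pre ++ 0 :: r))); rewrite -formD !addr0. Qed.

Lemma formZ pre a u r : F (pre ++ (a *: u) :: r) = a * F (pre ++ u :: r).
Proof. by rewrite -[a *: u]addr0 (alt_formL HF) form0 addr0. Qed.

Lemma formN pre u r : F (pre ++ (- u) :: r) = - F (pre ++ u :: r).
Proof. by rewrite -scaleN1r formZ mulN1r. Qed.

Lemma formB pre u v r : F (pre ++ (u - v) :: r) = F (pre ++ u :: r) - F (pre ++ v :: r).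
Proof. by rewrite formD formN. Qed.

Lemma form_swap u v r : F (u :: v :: r) = - F (v :: u :: r).
Proof. exact: (alt_formA HF [::]). Qed.

Lemma form_move1 pre u w r :
  F (pre ++ u :: w ++ r) = (-1) ^+ size w * F (pre ++ w ++ u :: r).
Proof.
elim: w pre => [|v w IH] pre /=; first by rewrite mul1r.
by rewrite (alt_formA HF) -cat_rcons IH cat_rcons signS mulNr.
Qed.

Lemma form_swap_block pre w1 w2 r :
  F (pre ++ w1 ++ w2 ++ r) = (-1) ^+ (size w1 * size w2) * F (pre ++ w2 ++ w1 ++ r).
Proof.
elim: w1 pre => [|u w1 IH] pre /=; first by rewrite mul0n mul1r.
by rewrite -cat_rcons IH cat_rcons form_move1 mulSn exprD; ring.
Qed.

End AltFormArithmetic.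

Definition ins (v : g) (F : fn) : fn := fun zs => F (v :: zs).
Definition insw (w : seq g) (F : fn) : fn := fun zs => F (w ++ zs).

Lemma alt_form_ins v F : alt_form F -> alt_form (ins v F).
Proof. by case=> hA hL; split=> pre; [exact: (hA (v :: pre)) | exact: (hL (v :: pre))]. Qed.

Lemma alt_form_insw w F : alt_form F -> alt_form (insw w F).
Proof. by case=> hA hL; split=> pre *; rewrite /insw !catA; [exact: hA | exact: hL]. Qed.

Lemma alt_formD F G : alt_form F -> alt_form G -> alt_form (fun zs => F zs + G zs).
Proof. by case=> hA hL [hA' hL']; split=> pre *; [rewrite hA hA' | rewrite hL hL']; ring. Qed.

Lemma alt_formN F : alt_form F -> alt_form (fun zs => - F zs).
Proof. by case=> hA hL; split=> pre *; [rewrite hA | rewrite hL]; ring. Qed.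

Lemma alt_formB F G : alt_form F -> alt_form G -> alt_form (fun zs => F zs - G zs).
Proof. by move=> hF hG; apply: alt_formD => //; apply: alt_formN. Qed.

Lemma alt_formZ c F : alt_form F -> alt_form (fun zs => c * F zs).
Proof. by case=> hA hL; split=> pre *; [rewrite hA | rewrite hL]; ring. Qed.

Lemma alt_form_sum I (s : seq I) (G : I -> fn) :
  (forall i, alt_form (G i)) -> alt_form (fun zs => \sum_(i <- s) G i zs).
Proof.
move=> hG; elim: s => [|i s IH].
  by split=> *; rewrite !big_nil; ring.
rewrite (_ : (fun zs => _) = (fun zs => G i zs + \sum_(j <- s) G j zs)).
  exact: alt_formD.
by apply: funE => zs; rewrite big_cons.
Qed.

Lemma alt_form_ictr (x : tensor g) F : alt_form F -> alt_form (ictr x F).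
Proof.
move=> hF; rewrite (_ : ictr x F = fun zs => \sum_(p <- x) p.1 * insw p.2 F zs) //.
by apply: alt_form_sum => p; apply/alt_formZ/alt_form_insw.
Qed.

Lemma ins_swap u w F : alt_form F -> ins u (ins w F) = (fun zs => - ins w (ins u F) zs).
Proof. by move=> hF; apply: funE => zs; rewrite /ins form_swap. Qed.

Lemma ins_lin a u w F : alt_form F ->
  ins (a *: u + w) F = (fun zs => a * ins u F zs + ins w F zs).
Proof. by move=> hF; apply: funE => zs; rewrite /ins (alt_formL hF [::]). Qed.

Lemma ins_insw v w F : alt_form F ->
  ins v (insw w F) = (fun ys => (-1) ^+ size w * insw w (ins v F) ys).
Proof.
move=> hF; apply: funE => ys.
by rewrite /ins /insw (form_move1 hF [::] v w ys) /= mulrA sign_sq mul1r.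
Qed.

Lemma insw_insw w1 w2 F : alt_form F ->
  insw w1 (insw w2 F) = (fun ys => (-1) ^+ (size w1 * size w2) * insw w2 (insw w1 F) ys).
Proof. by move=> hF; apply: funE => ys; rewrite /insw (form_swap_block hF [::] w2 w1) mulnC. Qed.

(* An operator defined by recursion on the first letter preserves [alt_form]:
   at the positions after [x :: pre] its [x]-slice is a combination of
   functionals that are alternating and linear after [pre]. *)
Definition alt_at pre (G : fn) :=
  forall u v r, G (pre ++ u :: v :: r) = - G (pre ++ v :: u :: r).
Definition lin_at pre (G : fn) := forall a u v r,
  G (pre ++ (a *: u + v) :: r) = a * G (pre ++ u :: r) + G (pre ++ v :: r).

Section SliceCombination.
Variables (pre : seq g) (x : g) (c e : A) (G P Q : fn).
Hypothesis slice : forall ys, G (x :: ys) = c * P ys + e * Q ys.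

Lemma alt_at_cons : alt_at pre P -> alt_at pre Q -> alt_at (x :: pre) G.
Proof. by move=> hP hQ u v r /=; rewrite !slice hP hQ; ring. Qed.

Lemma lin_at_cons : lin_at pre P -> lin_at pre Q -> lin_at (x :: pre) G.
Proof. by move=> hP hQ a u v r /=; rewrite !slice hP hQ; ring. Qed.

End SliceCombination.

Lemma alt_form_at_cons (Op : fn -> fn) (Q : g -> fn -> fn) (c e : A) :
  (forall F, alt_form F -> alt_at [::] (Op F) /\ lin_at [::] (Op F)) ->
  (forall x F, alt_form F -> alt_form (Q x F)) ->
  (forall x F ys, alt_form F -> Op F (x :: ys) = c * Op (ins x F) ys + e * Q x F ys) ->
  forall F, alt_form F -> alt_form (Op F).
Proof.
move=> h0 hQ hcons F hF; suff: forall pre, alt_at pre (Op F) /\ lin_at pre (Op F).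
  by move=> h; split=> pre; case: (h pre).
move=> pre; elim: pre F hF => [|x pre IH] F hF; first exact: h0.
have [IHa IHl] := IH _ (alt_form_ins x hF).
have [QA QL] := hQ x F hF.
split; first exact: (alt_at_cons (hcons x F^~ hF) IHa (QA pre)).
exact: (lin_at_cons (hcons x F^~ hF) IHl (QL pre)).
Qed.

Lemma size_absorb (a : A) (w : seq g) : size (absorb a w) = size w.
Proof. by case: w. Qed.

Lemma homog_size k (s : tensor g) p : homog k s -> p \in s -> size p.2 = k.
Proof. by move=> /allP h /h /eqP. Qed.

Lemma ictr_terms (x : tensor g) F zs : ictr x F zs = \sum_(p <- x) ictr [:: p] F zs.
Proof. by apply: eq_bigr => p _; rewrite /ictr big_seq1. Qed.

Lemma ictr_sumr (x : tensor g) I (s : seq I) (G : I -> fn) zs :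
  ictr x (fun zs => \sum_(i <- s) G i zs) zs = \sum_(i <- s) ictr x (G i) zs.
Proof.
by rewrite /ictr exchange_big; apply: eq_bigr => p _; rewrite mulr_sumr.
Qed.

Lemma ictr_word (p : A * seq g) F : alt_form F -> (0 < size p.2)%N ->
  ictr [:: p] F = insw (absorb p.1 p.2) F.
Proof.
case: p => a [|u w] //= hF _; apply: funE => zs.
by rewrite /ictr big_seq1 /insw -(formZ hF [::]).
Qed.

Lemma ictr_scalar (a : A) F : ictr [:: (a, [::] : seq g)] F = fun zs => a * F zs.
Proof. by apply: funE => zs; rewrite /ictr big_seq1. Qed.

Lemma ictr_comm kx ky (x y : tensor g) F zs : homog kx x -> homog ky y -> alt_form F ->
  ictr x (ictr y F) zs = (-1) ^+ (kx * ky) * ictr y (ictr x F) zs.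
Proof.
move=> hx hy hF; rewrite /ictr mulr_sumr big_seq.
under eq_bigr => p hp do rewrite mulr_sumr big_seq.
rewrite exchange_big /= [RHS]big_seq; apply: eq_bigr => q hq.
rewrite !mulr_sumr [RHS]big_seq; apply: eq_bigr => p hp.
by rewrite (form_swap_block hF [::] q.2 p.2) /= (homog_size hx hp) (homog_size hy hq) mulnC; ring.
Qed.

Lemma ictr_tcomb (s t : tensor g) c F zs :
  ictr (tcomb s c t) F zs = ictr s F zs + c * ictr t F zs.
Proof.
rewrite /tcomb /ictr big_cat big_map mulr_sumr /=.
by congr (_ + _); apply: eq_bigr => p _; rewrite mulrA.
Qed.

Lemma ictr0 (x : tensor g) zs : ictr x (fun _ => 0) zs = 0.
Proof. by rewrite /ictr big1 // => p _; rewrite mulr0. Qed.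

(** * Functionals of cotensors *)

Definition pair_mx n (fs : seq (dual g)) (h : nat -> g) : 'M[A]_n :=
  \matrix_(i < n, j < n) (nth (dual0 g) fs i) (h j).

Lemma det_pair_mx_perm n fs (h1 h2 : nat -> g) (s : 'S_n) :
  (forall j : 'I_n, h2 j = h1 (s j)) ->
  \det (pair_mx n fs h2) = (-1) ^+ s * \det (pair_mx n fs h1).
Proof.
move=> e; rewrite (_ : pair_mx n fs h2 = col_perm s (pair_mx n fs h1)).
  by rewrite col_permE det_mulmx det_perm odd_permV mulrC.
by apply/matrixP => i j; rewrite !mxE e.
Qed.

Lemma det_pair_mx_lin n fs (h h1 h2 : nat -> g) (k : 'I_n) a :
  h k = a *: h1 k + h2 k -> (forall j : 'I_n, j != k -> h j = h1 j /\ h j = h2 j) ->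
  \det (pair_mx n fs h) = a * \det (pair_mx n fs h1) + \det (pair_mx n fs h2).
Proof.
move=> ek ej; rewrite !(expand_det_col _ k) mulr_sumr -big_split; apply: eq_bigr => i _.
have c1 : cofactor (pair_mx n fs h) i k = cofactor (pair_mx n fs h1) i k.
  rewrite /cofactor; congr (_ * \det _); apply/matrixP => a' b; rewrite !mxE.
  by case: (ej (lift k b)) => [|-> //]; rewrite eq_sym neq_lift.
have c2 : cofactor (pair_mx n fs h) i k = cofactor (pair_mx n fs h2) i k.
  rewrite /cofactor; congr (_ * \det _); apply/matrixP => a' b; rewrite !mxE.
  by case: (ej (lift k b)) => [|_ -> //]; rewrite eq_sym neq_lift.
by rewrite -c1 -c2 !mxE ek (dvalP (nth (dual0 g) fs i)) mulrDl -mulrA.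
Qed.

Definition det_pairing (fs : seq (dual g)) : fn := fun xs =>
  if size fs == size xs then \det (pair_mx (size xs) fs (nth 0 xs)) else 0.

Lemma cot_evalE (c : cotensor g) xs :
  cot_eval c xs = \sum_(p <- c) p.1 * det_pairing p.2 xs.
Proof.
rewrite /cot_eval big_mkcond; apply: eq_bigr => p _.
by rewrite /det_pairing; case: eqP; rewrite ?mulr0.
Qed.

Lemma nth_cat_size (pre l : seq g) m : nth 0 (pre ++ l) (size pre + m) = nth 0 l m.
Proof. by rewrite nth_cat ltnNge leq_addr /= addKn. Qed.

Lemma nth_cat_at (pre l : seq g) x : nth 0 (pre ++ x :: l) (size pre) = x.
Proof. by rewrite -[size pre]addn0 nth_cat_size. Qed.

Lemma nth_cat_at1 (pre l : seq g) x y : nth 0 (pre ++ x :: y :: l) (size pre).+1 = y.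
Proof. by rewrite -addn1 nth_cat_size. Qed.

Lemma nth_cat_other (pre r : seq g) x y j : j != size pre ->
  nth 0 (pre ++ x :: r) j = nth 0 (pre ++ y :: r) j.
Proof.
move=> hj; rewrite !nth_cat; case: ltnP => // hle.
by case e: (j - size pre)%N => [|m] //; move: hj; rewrite -(subnK hle) e add0n eqxx.
Qed.

Lemma nth_cat_other2 (pre r : seq g) u v j : j != size pre -> j != (size pre).+1 ->
  nth 0 (pre ++ u :: v :: r) j = nth 0 (pre ++ v :: u :: r) j.
Proof.
move=> hj hj1; rewrite !nth_cat; case: ltnP => // hle.
case e: (j - size pre)%N => [|[|m]] //.
  by move: hj; rewrite -(subnK hle) e add0n eqxx.
by move: hj1; rewrite -(subnK hle) e add1n eqxx.
Qed.

Lemma det_pairing_alt fs pre u v r :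
  det_pairing fs (pre ++ u :: v :: r) = - det_pairing fs (pre ++ v :: u :: r).
Proof.
rewrite /det_pairing (_ : size (pre ++ v :: u :: r) = size (pre ++ u :: v :: r)); last first.
  by rewrite !size_cat.
case: eqP => _; last by rewrite oppr0.
set N := size (pre ++ u :: v :: r).
have hk : (size pre < N)%N by rewrite /N size_cat /=; lia.
have hk1 : ((size pre).+1 < N)%N by rewrite /N size_cat /=; lia.
pose k := Ordinal hk; pose k1 := Ordinal hk1.
rewrite (@det_pair_mx_perm N fs (nth 0 (pre ++ u :: v :: r)) (nth 0 (pre ++ v :: u :: r))
  (tperm k k1)).
  rewrite odd_tperm (_ : k != k1) ?mulN1r ?opprK //.
  by apply/eqP => /(congr1 val) /=; lia.
move=> j; case: tpermP => [->|->|hj1 hj2] /=.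
- by rewrite nth_cat_at nth_cat_at1.
- by rewrite nth_cat_at nth_cat_at1.
by apply: nth_cat_other2; apply/eqP => e; [apply: hj1 | apply: hj2]; apply: val_inj.
Qed.

Lemma det_pairing_lin fs pre a u w r :
  det_pairing fs (pre ++ (a *: u + w) :: r) =
  a * det_pairing fs (pre ++ u :: r) + det_pairing fs (pre ++ w :: r).
Proof.
rewrite /det_pairing !size_cat /=; case: eqP => _; last by rewrite mulr0 addr0.
set N := (size pre + (size r).+1)%N.
have hk : (size pre < N)%N by rewrite /N; lia.
apply: (@det_pair_mx_lin N fs _ (nth 0 (pre ++ u :: r)) (nth 0 (pre ++ w :: r)) (Ordinal hk)).
  by rewrite /= !nth_cat_at.
move=> j hj; have {}hj : (j : nat) != size pre.
  by apply: contraNneq hj => e; apply/eqP/val_inj.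
by split; apply: nth_cat_other.
Qed.

Lemma alt_form_cot_eval (c : cotensor g) : alt_form (cot_eval c).
Proof.
rewrite (_ : cot_eval c = fun xs => \sum_(p <- c) p.1 * det_pairing p.2 xs).
  apply: alt_form_sum => p; apply: alt_formZ; split.
    exact: det_pairing_alt.
  exact: det_pairing_lin.
by apply: funE => xs; rewrite cot_evalE.
Qed.

(* i_v on cotensors, by Laplace expansion along the first column *)
Definition cot_ins (v : g) (c : cotensor g) : cotensor g :=
  flatten [seq [seq ((-1) ^+ i * (p.1 * (nth (dual0 g) p.2 i) v), drop_at i p.2)
               | i <- iota 0 (size p.2)] | p <- c].

Lemma det_pairing_cons fs v zs : det_pairing fs (v :: zs) =
  \sum_(i <- iota 0 (size fs)) (-1) ^+ i * ((nth (dual0 g) fs i) v * det_pairing (drop_at i fs) zs).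
Proof.
rewrite /det_pairing /=; case: eqP => hs; last first.
  rewrite big_seq big1 // => i; rewrite mem_iota add0n => /andP [_ hi].
  rewrite size_drop_at //; case: eqP => [e|_]; last by rewrite !mulr0.
  by case: hs; rewrite -e prednK // (leq_ltn_trans _ hi).
rewrite hs sum_iota (expand_det_col _ ord0); apply: eq_bigr => i _.
rewrite size_drop_at hs // eqxx /= /cofactor addn0 !mxE /= mulrCA.
congr (_ * (_ * \det _)); apply/matrixP => a b.
by rewrite !mxE lift0 /= nth_drop_at // hs.
Qed.

Lemma cot_eval_cons c v zs : cot_eval c (v :: zs) = cot_eval (cot_ins v c) zs.
Proof.
rewrite !cot_evalE /cot_ins big_flatten big_map; apply: eq_bigr => p _.
by rewrite det_pairing_cons big_map mulr_sumr; apply: eq_bigr => i _ /=; ring.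
Qed.

Fixpoint cot_insw (w : seq g) (c : cotensor g) : cotensor g :=
  if w is v :: w' then cot_insw w' (cot_ins v c) else c.

Lemma cot_eval_cat w c zs : cot_eval c (w ++ zs) = cot_eval (cot_insw w c) zs.
Proof. by elim: w c => [|v w IH] c //=; rewrite cot_eval_cons IH. Qed.

Lemma ictr_cot_eval (x : tensor g) (c : cotensor g) :
  exists c' : cotensor g, cot_eval c' =1 ictr x (cot_eval c).
Proof.
elim: x => [|p x [c' IH]]; first by exists [::] => zs; rewrite /cot_eval /ictr !big_nil.
exists ([seq (p.1 * q.1, q.2) | q <- cot_insw p.2 c] ++ c') => zs.
rewrite /ictr big_cons -/(ictr x (cot_eval c) zs) -IH.
rewrite {1}/cot_eval big_cat /= big_map; congr (_ + _).
rewrite cot_eval_cat /cot_eval mulr_sumr.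
by apply: eq_bigr => q _; rewrite mulrA.
Qed.

End AlternatingForms.

(** * Cartan calculus of a Lie-Rinehart pair *)

Section CartanCalculus.
Variables (R : realType) (A : comAlgType R) (g : lmodType A).
Variables (br : g -> g -> g) (D : g -> A -> A).
Hypothesis LR : lie_rinehart br D.

Local Notation fn := (functional g).
Local Notation d := (deR br D).

Lemma brDl x y z : br (x + y) z = br x z + br y z. Proof. exact: (lr_brDl LR). Qed.
Lemma brDr x y z : br x (y + z) = br x y + br x z. Proof. exact: (lr_brDr LR). Qed.

Lemma br0r y : br y 0 = 0.
Proof. by apply: (addrI (br y 0)); rewrite -brDr !addr0. Qed.

Lemma brNr x y : br x (- y) = - br x y.
Proof. by apply: (addrI (br x y)); rewrite -brDr !subrr br0r. Qed.

Lemma brC x y : br x y = - br y x.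
Proof.
have := lr_br_alt LR (x + y).
rewrite brDl !brDr !(lr_br_alt LR) add0r addr0 => /eqP.
by rewrite addr_eq0 => /eqP.
Qed.

Lemma brZr a u x : br x (a *: u) = D x a *: u + a *: br x u.
Proof. exact: (lr_leibniz LR). Qed.

Lemma brZl a u x : br (a *: u) x = a *: br u x - D x a *: u.
Proof. by rewrite brC brZr opprD addrC -scalerN -brC. Qed.

Lemma br_jacobi x y z : br x (br y z) - br y (br x z) = br (br x y) z.
Proof.
have := lr_jacobi LR x y z.
rewrite [br z x]brC brNr [br z (br x y)]brC => e.
by apply/eqP; rewrite -subr_eq0; apply/eqP.
Qed.

Lemma D0l b : D 0 b = 0.
Proof.
have := lr_D_lin LR 1 0 0 b; rewrite scaler0 addr0 mul1r => e.
by apply: (addrI (D 0 b)); rewrite addr0 -e.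
Qed.

Lemma DDl u v b : D (u + v) b = D u b + D v b.
Proof. by rewrite -{1}[u]scale1r (lr_D_lin LR) mul1r. Qed.

Lemma DZl a u b : D (a *: u) b = a * D u b.
Proof. by rewrite -[a *: u]addr0 (lr_D_lin LR) D0l addr0. Qed.

Lemma DDr x b c : D x (b + c) = D x b + D x c. Proof. exact: (lr_D_add LR). Qed.

Lemma D0r x : D x 0 = 0.
Proof. by apply: (addrI (D x 0)); rewrite -DDr !addr0. Qed.

Lemma DNr x b : D x (- b) = - D x b.
Proof. by apply: (addrI (D x b)); rewrite -DDr !subrr D0r. Qed.

Lemma DMr x b c : D x (b * c) = b * D x c + D x b * c. Proof. exact: (lr_D_mul LR). Qed.

Lemma D1r x : D x 1 = 0.
Proof.
have := DMr x 1 1; rewrite !mulr1 mul1r => e.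
by apply: (addrI (D x 1)); rewrite addr0 -e.
Qed.

Lemma D_sign x k : D x ((-1) ^+ k) = 0.
Proof. by elim: k => [|k IH]; rewrite ?expr0 ?D1r // signS DNr IH oppr0. Qed.

(* the Lie derivative L_v = d i_v + i_v d along a vector, in closed form *)
Definition lieV (v : g) (F : fn) : fn := fun xs =>
  D v (F xs) - \sum_(j < size xs) (-1) ^+ j * F (br v (nth 0 xs j) :: drop_at j xs).

(* da /\ F *)
Definition dwedge (a : A) (F : fn) : fn := fun xs =>
  \sum_(j < size xs) (-1) ^+ j * (D (nth 0 xs j) a * F (drop_at j xs)).

Lemma sum_triangle_recl n (f : nat -> nat -> A) :
  \sum_(i < n.+1) \sum_(j < n.+1 | (i < j)%N) f i j =
  \sum_(j < n) f 0%N j.+1 + \sum_(i < n) \sum_(j < n | (i < j)%N) f i.+1 j.+1.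
Proof.
rewrite big_ord_recl; congr (_ + _).
  by rewrite big_mkcond big_ord_recl /= add0r.
apply: eq_bigr => i _; rewrite big_mkcond big_ord_recl /= add0r.
by rewrite [RHS]big_mkcond; apply: eq_bigr => j _ /=; rewrite ltnS.
Qed.

Lemma lieV_nil v F : lieV v F [::] = D v (F [::]).
Proof. by rewrite /lieV big_ord0 subr0. Qed.

Lemma lieV_cons v F x xs : alt_form F ->
  lieV v F (x :: xs) = lieV v (ins x F) xs - F (br v x :: xs).
Proof.
move=> hF; rewrite /lieV /ins /= big_ord_recl /= mul1r drop_at0.
rewrite opprD addrA [in RHS]addrAC; congr (_ + - _).
by apply: eq_bigr => j _; rewrite drop_atS signS form_swap // mulrNN.
Qed.

Lemma dwedge_cons a F x xs :
  dwedge a F (x :: xs) = D x a * F xs - dwedge a (ins x F) xs.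
Proof.
rewrite /dwedge /ins /= big_ord_recl /= mul1r drop_at0; congr (_ + _).
by rewrite -sumrN; apply: eq_bigr => j _; rewrite drop_atS signS mulNr.
Qed.

Lemma deR_nil F : d F [::] = 0.
Proof. by rewrite /deR !big_ord0 addr0. Qed.

(* Cartan's formula i_x d = L_x - d i_x, read as a recursion for d *)
Lemma deR_cons F x xs : alt_form F ->
  d F (x :: xs) = lieV x F xs - d (ins x F) xs.
Proof.
move=> hF; rewrite /deR /lieV /ins /=.
rewrite (sum_triangle_recl (size xs) (fun i j => (-1) ^+ (i + j) *
  F (br (nth 0 (x :: xs) i) (nth 0 (x :: xs) j) :: drop_at i (drop_at j (x :: xs))))).
rewrite big_ord_recl /= mul1r drop_at0.
have e1 : \sum_(i < size xs) (-1) ^+ bump 0 i * D xs`_(0 + i) (F (drop_at (bump 0 i) (x :: xs)))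
   = - \sum_(j < size xs) (-1) ^+ j * D xs`_j (F (x :: drop_at j xs)).
  by rewrite -sumrN; apply: eq_bigr => j _; rewrite drop_atS signS mulNr.
have e2 : \sum_(j < size xs)
        (-1) ^+ (0 + j.+1) * F (br x xs`_j :: drop_at 0 (drop_at j.+1 (x :: xs)))
   = - \sum_(j < size xs) (-1) ^+ j * F (br x xs`_j :: drop_at j xs).
  by rewrite -sumrN; apply: eq_bigr => j _; rewrite drop_atS drop_at0 signS mulNr.
have e3 : \sum_(i < size xs) \sum_(j < size xs | (i < j)%N)
        (-1) ^+ (i.+1 + j.+1) * F (br xs`_i xs`_j :: drop_at i.+1 (drop_at j.+1 (x :: xs)))
   = - \sum_(i < size xs) \sum_(j < size xs | (i < j)%N)
        (-1) ^+ (i + j) * F [:: x, br xs`_i xs`_j & drop_at i (drop_at j xs)].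
  rewrite -sumrN; apply: eq_bigr => i _; rewrite -sumrN; apply: eq_bigr => j _.
  by rewrite !drop_atS form_swap // addSn addnS !signS opprK mulrN.
rewrite e1 e2 e3; ring.
Qed.

Lemma deRD F G xs : d (fun zs => F zs + G zs) xs = d F xs + d G xs.
Proof.
rewrite /deR addrACA; congr (_ + _); rewrite -big_split; apply: eq_bigr => i _.
  by rewrite DDr mulrDr.
by rewrite -big_split; apply: eq_bigr => j _; rewrite mulrDr.
Qed.

Lemma deRN F xs : d (fun zs => - F zs) xs = - d F xs.
Proof.
rewrite /deR opprD -!sumrN; congr (_ + _).
  by apply: eq_bigr => j _; rewrite DNr mulrN.
by apply: eq_bigr => i _; rewrite -sumrN; apply: eq_bigr => j _; rewrite mulrN.
Qed.

Lemma deRB F G xs : d (fun zs => F zs - G zs) xs = d F xs - d G xs.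
Proof. by rewrite deRD deRN. Qed.

Lemma deRZ a F xs : d (fun zs => a * F zs) xs = a * d F xs + dwedge a F xs.
Proof.
rewrite /deR /dwedge mulrDr addrAC; congr (_ + _).
  by rewrite mulr_sumr -big_split; apply: eq_bigr => j _ /=; rewrite DMr; ring.
rewrite mulr_sumr; apply: eq_bigr => i _.
by rewrite mulr_sumr; apply: eq_bigr => j _; ring.
Qed.

Lemma deR_sum I (s : seq I) (G : I -> fn) xs :
  d (fun zs => \sum_(i <- s) G i zs) xs = \sum_(i <- s) d (G i) xs.
Proof.
elim: s => [|i s IH].
  rewrite big_nil (_ : (fun _ => _) = fun _ => 0 * 0); last first.
    by apply: funE => zs; rewrite big_nil mulr0.
  by rewrite deRZ /dwedge big1 ?mul0r ?add0r // => j _; rewrite D0r !mul0r mulr0.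
rewrite (_ : (fun zs => _) = fun zs => G i zs + \sum_(j <- s) G j zs).
  by rewrite deRD IH big_cons.
by apply: funE => zs; rewrite big_cons.
Qed.

Lemma dwedge_sign k F xs : dwedge ((-1) ^+ k) F xs = 0.
Proof. by rewrite /dwedge big1 // => j _; rewrite D_sign mul0r mulr0. Qed.

Lemma deR_sign k F xs : d (fun zs => (-1) ^+ k * F zs) xs = (-1) ^+ k * d F xs.
Proof. by rewrite deRZ dwedge_sign addr0. Qed.

Lemma lieVD v F G xs : lieV v (fun zs => F zs + G zs) xs = lieV v F xs + lieV v G xs.
Proof. by rewrite /lieV DDr; under eq_bigr do rewrite mulrDr; rewrite big_split /=; ring. Qed.

Lemma lieVN v F xs : lieV v (fun zs => - F zs) xs = - lieV v F xs.
Proof. by rewrite /lieV DNr; under eq_bigr do rewrite mulrN; rewrite sumrN; ring. Qed.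

Lemma lieVB v F G xs : lieV v (fun zs => F zs - G zs) xs = lieV v F xs - lieV v G xs.
Proof. by rewrite lieVD lieVN. Qed.

Lemma lieVZ v a F xs : lieV v (fun zs => a * F zs) xs = a * lieV v F xs + D v a * F xs.
Proof. by rewrite /lieV DMr; under eq_bigr do rewrite mulrCA; rewrite -mulr_sumr; ring. Qed.

Lemma lieV_sign v k F xs : lieV v (fun zs => (-1) ^+ k * F zs) xs = (-1) ^+ k * lieV v F xs.
Proof. by rewrite lieVZ D_sign mul0r addr0. Qed.

Lemma lieV_vD u w F xs : alt_form F -> lieV (u + w) F xs = lieV u F xs + lieV w F xs.
Proof.
move=> hF; rewrite /lieV DDl.
under eq_bigr do rewrite brDl (formD hF [::]) /= mulrDr.
by rewrite big_split /=; ring.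
Qed.

Lemma lieV_vZ a u F xs : alt_form F ->
  lieV (a *: u) F xs = a * lieV u F xs + dwedge a (ins u F) xs.
Proof.
move=> hF; rewrite /lieV /dwedge /ins DZl.
under eq_bigr do rewrite brZl (formB hF [::]) /= !(formZ hF [::]) /= mulrBr.
by rewrite sumrB; under eq_bigr do rewrite mulrCA; rewrite -mulr_sumr; ring.
Qed.

Lemma alt_form_lieV v F : alt_form F -> alt_form (lieV v F).
Proof.
apply: (alt_form_at_cons (Q := fun x => ins (br v x)) (c := 1) (e := -1)).
- move=> {}F hF; have hA := form_swap hF; split=> [u w r | a u w r] /=.
    rewrite (lieV_cons _ _ _ hF) (lieV_cons _ _ _ (alt_form_ins u hF)).
    rewrite (lieV_cons _ _ _ hF) (lieV_cons _ _ _ (alt_form_ins w hF)).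
    by rewrite ins_swap // lieVN /ins (hA u) (hA w); ring.
  rewrite !(lieV_cons _ _ _ hF) ins_lin // lieVD lieVZ brDr brZr /ins.
  by rewrite !(formD hF [::]) !(formZ hF [::]) /=; ring.
- by move=> x {}F hF /=; apply: alt_form_ins.
- by move=> x {}F ys hF; rewrite lieV_cons // mul1r mulN1r.
Qed.

Lemma alt_form_deR F : alt_form F -> alt_form (d F).
Proof.
apply: (alt_form_at_cons (Q := lieV) (c := -1) (e := 1)).
- move=> {}F hF; split=> [u w r | a u w r] /=.
    rewrite (deR_cons _ _ hF) (deR_cons _ _ (alt_form_ins u hF)).
    rewrite (deR_cons _ _ hF) (deR_cons _ _ (alt_form_ins w hF)).
    rewrite !(lieV_cons _ _ _ hF) ins_swap // deRN.
    by rewrite [br w u]brC /ins (formN hF [::]) /=; ring.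
  rewrite !(deR_cons _ _ hF) ins_lin // deRD deRZ lieV_vD // lieV_vZ //; ring.
- by move=> x {}F hF; apply: alt_form_lieV.
- by move=> x {}F ys hF; rewrite deR_cons // mul1r mulN1r addrC.
Qed.

Lemma ins_lieV x v F : alt_form F ->
  ins x (lieV v F) = (fun zs => lieV v (ins x F) zs - ins (br v x) F zs).
Proof. by move=> hF; apply: funE => zs; rewrite /ins lieV_cons. Qed.

Lemma ins_deR x F : alt_form F ->
  ins x (d F) = (fun zs => lieV x F zs - d (ins x F) zs).
Proof. by move=> hF; apply: funE => zs; rewrite /ins deR_cons. Qed.

Lemma lieV_comm x y F xs : alt_form F ->
  lieV x (lieV y F) xs - lieV y (lieV x F) xs = lieV (br x y) F xs.
Proof.
elim: xs F => [|z zs IH] F hF; first by rewrite !lieV_nil (lr_D_br LR).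
rewrite (lieV_cons _ _ _ (alt_form_lieV y hF)) (lieV_cons _ _ _ (alt_form_lieV x hF)).
rewrite !ins_lieV // (lieVB x (lieV y (ins z F)) (ins (br y z) F)).
rewrite (lieVB y (lieV x (ins z F)) (ins (br x z) F)) !(lieV_cons _ _ _ hF).
by rewrite -(IH _ (alt_form_ins z hF)) -br_jacobi (formB hF [::]) /=; ring.
Qed.

(* d^2 = 0 and L_x d = d L_x are proved together: the inductive step of each
   uses the other on shorter words *)
Lemma deR_deR_lieV xs : forall F, alt_form F ->
  d (d F) xs = 0 /\ forall x, lieV x (d F) xs = d (lieV x F) xs.
Proof.
elim: xs => [|y ys IH] F hF.
  by split=> [|x]; rewrite ?lieV_nil !deR_nil ?D0r.
have hdF := alt_form_deR hF.
have [IH1 IH2] := IH _ hF; have [IH3 IH4] := IH _ (alt_form_ins y hF).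
split=> [|x].
  by rewrite (deR_cons _ _ hdF) ins_deR // (deRB (lieV y F) (d (ins y F))) IH2 IH3; ring.
rewrite (lieV_cons _ _ _ hdF) ins_deR // (lieVB x (lieV y F) (d (ins y F))).
rewrite (deR_cons _ _ hF) (deR_cons _ _ (alt_form_lieV x hF)) ins_lieV //.
rewrite (deRB (lieV x (ins y F)) (ins (br x y) F)) IH4.
by rewrite -(lieV_comm _ _ _ hF); ring.
Qed.

Lemma deR_deR F xs : alt_form F -> d (d F) xs = 0.
Proof. by move=> hF; case: (deR_deR_lieV xs hF). Qed.

Lemma ictr_sn_word w1 w2 F zs : ictr (sn_word br w1 w2) F zs =
  \sum_(i < size w1) \sum_(j < size w2)
    (-1) ^+ (i + j) * F (br (nth 0 w1 i) (nth 0 w2 j) :: drop_at i w1 ++ drop_at j w2 ++ zs).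
Proof.
rewrite /ictr /sn_word big_flatten /= big_map sum_iota; apply: eq_bigr => i _.
by rewrite big_map sum_iota; apply: eq_bigr => j _ /=; rewrite -catA.
Qed.

Lemma ictr_sn_vs w a F zs : ictr (sn_vs D w a) F zs =
  \sum_(i < size w) (-1) ^+ (size w - i.+1) * D (nth 0 w i) a * F (drop_at i w ++ zs).
Proof. by rewrite /ictr /sn_vs big_map sum_iota. Qed.

Lemma ictr_sn_sv a w F zs : ictr (sn_sv D a w) F zs =
  \sum_(j < size w) (-1) ^+ j.+1 * D (nth 0 w j) a * F (drop_at j w ++ zs).
Proof. by rewrite /ictr /sn_sv big_map sum_iota. Qed.

(* i_{[v, w]} for a vector v and a word w *)
Definition ins_brV v w (G : fn) : fn := fun zs =>
  \sum_(j < size w) (-1) ^+ j * G (br v (nth 0 w j) :: drop_at j w ++ zs).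

Lemma ins_brV_cartan v w G zs : alt_form G ->
  ins_brV v w G zs = lieV v (insw w G) zs - insw w (lieV v G) zs.
Proof.
elim: w G zs => [|x w IH] G zs hG; first by rewrite /ins_brV /insw /= big_ord0 subrr.
rewrite /ins_brV /= big_ord_recl /= mul1r drop_at0.
have -> : \sum_(i < size w)
          (-1) ^+ bump 0 i * G (br v w`_(0 + i) :: drop_at (bump 0 i) (x :: w) ++ zs)
        = ins_brV v w (ins x G) zs.
  by apply: eq_bigr => j _; rewrite drop_atS /= form_swap // signS mulrNN.
rewrite (IH _ _ (alt_form_ins x hG)) (_ : insw (x :: w) G = insw w (ins x G)) //.
by rewrite /insw /= lieV_cons //; ring.
Qed.

Definition lieW (w : seq g) (F : fn) : fn := fun zs =>
  d (insw w F) zs - (-1) ^+ size w * insw w (d F) zs.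

Lemma lieW_nil F zs : lieW [::] F zs = 0.
Proof. by rewrite /lieW mul1r subrr. Qed.

Lemma lieW_cons v w F zs : alt_form F ->
  lieW (v :: w) F zs = lieW w (ins v F) zs + (-1) ^+ size w * insw w (lieV v F) zs.
Proof.
move=> hF; rewrite /lieW (_ : insw (v :: w) F = insw w (ins v F)) //.
by rewrite /insw /= deR_cons // signS; ring.
Qed.

Lemma lieW_sign w k F zs : lieW w (fun zs => (-1) ^+ k * F zs) zs = (-1) ^+ k * lieW w F zs.
Proof.
rewrite /lieW /insw.
rewrite (_ : (fun _ => _) = fun zs0 => (-1) ^+ k * insw w F zs0) //.
by rewrite !deR_sign; ring.
Qed.

Lemma ictr_sn_word_cons v w1 w2 F zs : alt_form F ->
  ictr (sn_word br (v :: w1) w2) F zs =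
  ictr (sn_word br w1 w2) (ins v F) zs + (-1) ^+ size w1 * ins_brV v w2 (insw w1 F) zs.
Proof.
move=> hF; rewrite !ictr_sn_word /= big_ord_recl addrC; congr (_ + _).
  apply: eq_bigr => i _; apply: eq_bigr => j _.
  by rewrite lift0 /= form_swap // addSn signS /ins [drop_at i w1]/drop_at; ring.
rewrite /ins_brV mulr_sumr; apply: eq_bigr => j _.
by rewrite add0n drop_at0 -[X in F X]cat0s form_move1 // /insw /=; ring.
Qed.

Lemma ins_brV_insw v w1 w2 F zs : alt_form F ->
  ins_brV v w1 F (w2 ++ zs) = (-1) ^+ (size w1 * size w2) * ins_brV v w1 (insw w2 F) zs.
Proof.
move=> hF; rewrite /ins_brV mulr_sumr; apply: eq_bigr => j _ /=.
have hj : (size (drop_at j w1)).+1 = size w1.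
  by rewrite size_drop_at // prednK // (leq_ltn_trans _ (ltn_ord j)).
have := form_swap_block hF [::] (br v w1`_j :: drop_at j w1) w2 zs; rewrite /= hj => ->.
by rewrite /insw -catA mulrCA.
Qed.

Lemma cartan_sn_word w1 w2 F zs : alt_form F ->
  ictr (sn_word br w1 w2) F zs =
  (-1) ^+ ((size w1).+1 * size w2) * lieW w1 (insw w2 F) zs - insw w2 (lieW w1 F) zs.
Proof.
elim: w1 F zs => [|v w1 IH] F zs hF.
  by rewrite ictr_sn_word big_ord0 /insw !lieW_nil mulr0 subrr.
have hF2 := alt_form_insw w2 hF.
rewrite ictr_sn_word_cons // (IH _ _ (alt_form_ins v hF)).
rewrite (ins_brV_cartan _ _ _ (alt_form_insw w1 hF)) (lieW_cons _ _ _ hF2) ins_insw // lieW_sign.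
rewrite (_ : insw w2 (lieW (v :: w1) F) zs = lieW (v :: w1) F (w2 ++ zs)) // lieW_cons //.
have e1 : insw w2 (lieV v (insw w1 F)) zs =
          insw w1 (lieV v F) (w2 ++ zs) + ins_brV v w1 F (w2 ++ zs).
  by rewrite ins_brV_cartan // /insw; ring.
have e2 : insw w1 (lieV v (insw w2 F)) zs =
          lieV v (insw w1 (insw w2 F)) zs - ins_brV v w1 (insw w2 F) zs.
  by rewrite ins_brV_cartan // /insw; ring.
rewrite e1 e2 (_ : lieW w1 (ins v F) (w2 ++ zs) = insw w2 (lieW w1 (ins v F)) zs) //.
rewrite (insw_insw w1 w2 hF) lieV_sign ins_brV_insw // !sign_oddE !oddM /=.
by case: (odd (size w1)); case: (odd (size w2)); rewrite /=; ring.
Qed.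

Lemma dwedgeZ a c F xs : dwedge a (fun zs => c * F zs) xs = c * dwedge a F xs.
Proof. by rewrite /dwedge mulr_sumr; apply: eq_bigr => j _; ring. Qed.

Lemma cartan_sn_vs w a F zs : alt_form F ->
  ictr (sn_vs D w a) F zs = lieW w (fun zs => a * F zs) zs - a * lieW w F zs.
Proof.
elim: w F zs => [|v w IH] F zs hF; first by rewrite ictr_sn_vs big_ord0 !lieW_nil mulr0 subrr.
rewrite ictr_sn_vs /= big_ord_recl /= subn1 /= drop_at0.
rewrite (lieW_cons _ _ _ (alt_formZ a hF)) (lieW_cons _ _ _ hF).
rewrite (_ : ins v (fun zs => a * F zs) = fun zs => a * ins v F zs) //.
have -> : \sum_(i < size w) (-1) ^+ ((size w).+1 - (bump 0 i).+1) * D w`_(0 + i) a *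
            F (drop_at (bump 0 i) (v :: w) ++ zs) = ictr (sn_vs D w a) (ins v F) zs.
  by rewrite ictr_sn_vs; apply: eq_bigr => i _; rewrite subSS drop_atS.
by rewrite (IH _ _ (alt_form_ins v hF)) /insw lieVZ; ring.
Qed.

Lemma cartan_sn_sv a w F zs :
  ictr (sn_sv D a w) F zs = (-1) ^+ size w * dwedge a (insw w F) zs - insw w (dwedge a F) zs.
Proof.
elim: w F zs => [|v w IH] F zs; first by rewrite ictr_sn_sv big_ord0 mul1r /insw subrr.
rewrite ictr_sn_sv /= big_ord_recl /= drop_at0 expr1.
have -> : \sum_(i < size w) (-1) ^+ (bump 0 i).+1 * D w`_(0 + i) a *
            F (drop_at (bump 0 i) (v :: w) ++ zs) = - ictr (sn_sv D a w) (ins v F) zs.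
  by rewrite ictr_sn_sv -sumrN; apply: eq_bigr => i _; rewrite drop_atS signS /ins /=; ring.
rewrite IH (_ : insw (v :: w) F = insw w (ins v F)) //.
rewrite (_ : insw (v :: w) (dwedge a F) zs = dwedge a F (v :: w ++ zs)) //.
by rewrite dwedge_cons signS /insw; ring.
Qed.

Lemma lieD_terms (x : tensor g) k F zs : lieD br D x k F zs = \sum_(p <- x) lieD br D [:: p] k F zs.
Proof.
rewrite /lieD (_ : ictr x F = fun zs => \sum_(p <- x) ictr [:: p] F zs).
  by rewrite deR_sum ictr_terms mulr_sumr -sumrB.
by apply: funE => ys; rewrite ictr_terms.
Qed.

Lemma lieD_sumr (x : tensor g) k I (s : seq I) (G : I -> fn) zs :
  lieD br D x k (fun zs => \sum_(i <- s) G i zs) zs = \sum_(i <- s) lieD br D x k (G i) zs.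
Proof.
rewrite /lieD (_ : ictr x (fun zs => _) = fun zs => \sum_(i <- s) ictr x (G i) zs).
  have -> : ictr x (d (fun zs => \sum_(i <- s) G i zs)) zs = \sum_(i <- s) ictr x (d (G i)) zs.
    by rewrite -ictr_sumr; apply: eq_bigr => p _; rewrite deR_sum.
  by rewrite deR_sum mulr_sumr -sumrB.
by apply: funE => ys; rewrite ictr_sumr.
Qed.

Lemma lieD_word (p : A * seq g) k F : alt_form F -> size p.2 = k.+1 ->
  lieD br D [:: p] k.+1 F = lieW (absorb p.1 p.2) F.
Proof.
move=> hF hp; have p_gt0 : (0 < size p.2)%N by rewrite hp.
apply: funE => zs; rewrite /lieD /lieW size_absorb hp !ictr_word //.
exact: alt_form_deR.
Qed.

Lemma lieD_scalar (a : A) F : lieD br D [:: (a, [::] : seq g)] 0 F = dwedge a F.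
Proof. by apply: funE => zs; rewrite /lieD !ictr_scalar mul1r deRZ addrAC subrr add0r. Qed.

Lemma alt_form_lieD (x : tensor g) k F : alt_form F -> alt_form (lieD br D x k F).
Proof.
move=> hF; apply: alt_formB; first exact/alt_form_deR/alt_form_ictr.
exact/alt_formZ/alt_form_ictr/alt_form_deR.
Qed.

Lemma cartan_sn_term kx ky (p q : A * seq g) F zs :
  size p.2 = kx -> size q.2 = ky -> alt_form F ->
  ictr (sn_term br D p q) F zs =
  (-1) ^+ (kx.+1 * ky) * lieD br D [:: p] kx (ictr [:: q] F) zs -
  ictr [:: q] (lieD br D [:: p] kx F) zs.
Proof.
case: p q => [a [|u w]] [b [|u' w']] /= <- <- hF.
- by rewrite {1}/ictr big_nil !ictr_scalar !lieD_scalar muln0 mul1r dwedgeZ subrr.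
- rewrite cartan_sn_sv mul1n !ictr_word //; last exact: alt_form_lieD.
  by rewrite !lieD_scalar.
- by rewrite cartan_sn_vs // muln0 mul1r !ictr_scalar !lieD_word //; exact: alt_formZ.
rewrite cartan_sn_word // !ictr_word //; last exact: alt_form_lieD.
by rewrite !lieD_word //; exact: alt_form_insw.
Qed.

Lemma ictr_schouten (x y : tensor g) F zs :
  ictr (schouten br D x y) F zs = \sum_(p <- x) \sum_(q <- y) ictr (sn_term br D p q) F zs.
Proof.
rewrite /schouten {1}/ictr big_flatten big_map; apply: eq_bigr => p _.
by rewrite big_flatten big_map.
Qed.

Lemma cartan_schouten kx ky (x y : tensor g) F zs :
  homog kx x -> homog ky y -> alt_form F ->
  ictr (schouten br D x y) F zs =
  (-1) ^+ (kx.+1 * ky) * lieD br D x kx (ictr y F) zs - ictr y (lieD br D x kx F) zs.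
Proof.
move=> hx hy hF.
have e1 : lieD br D x kx (ictr y F) zs =
          \sum_(p <- x) \sum_(q <- y) lieD br D [:: p] kx (ictr [:: q] F) zs.
  rewrite lieD_terms; apply: eq_bigr => p _.
  rewrite (_ : ictr y F = fun zs => \sum_(q <- y) ictr [:: q] F zs) ?lieD_sumr //.
  by apply: funE => ys; rewrite ictr_terms.
have e2 : ictr y (lieD br D x kx F) zs =
          \sum_(p <- x) \sum_(q <- y) ictr [:: q] (lieD br D [:: p] kx F) zs.
  rewrite ictr_terms exchange_big; apply: eq_bigr => q _.
  rewrite (_ : lieD br D x kx F = fun zs => \sum_(p <- x) lieD br D [:: p] kx F zs) ?ictr_sumr //.
  by apply: funE => ys; rewrite lieD_terms.
rewrite ictr_schouten e1 e2 mulr_sumr -sumrB big_seq [RHS]big_seq; apply: eq_bigr => p hp.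
rewrite mulr_sumr -sumrB big_seq [RHS]big_seq; apply: eq_bigr => q hq.
exact: cartan_sn_term (homog_size hx hp) (homog_size hy hq) hF.
Qed.

Lemma lieD_deR (x : tensor g) k G zs : alt_form G ->
  lieD br D x k (d G) zs = - (-1) ^+ k * d (lieD br D x k G) zs.
Proof.
move=> hG; rewrite /lieD (_ : ictr x (d (d G)) = fun _ => 0); last first.
  by apply: funE => ys; rewrite /ictr big1 // => p _; rewrite deR_deR // mulr0.
rewrite (_ : (fun zs => _) = fun zs => d (ictr x G) zs + (-1) ^+ k.+1 * ictr x (d G) zs).
  rewrite deRD deR_sign (deR_deR _ (alt_form_ictr x hG)) signS /= add0r.
  by rewrite mulrA mulrNN sign_sq mul1r mulr0 subr0.
by apply: funE => ys; rewrite signS mulNr.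
Qed.

(** * The homotopy Poisson 2-bracket *)

Lemma lieD_hamiltonian (x : tensor g) k (O F : fn) : alt_form F ->
  d O =1 (fun _ => 0) -> ictr x O =1 d F -> lieD br D x k O = (fun _ => 0).
Proof.
move=> hF /funE dO /funE xO; apply: funE => zs.
by rewrite /lieD xO dO deR_deR // ictr0 mulr0 subr0.
Qed.

(* Contractions graded-commute: L_z i_y O = d i_y i_z O +- i_w i_z O. *)
Lemma lieD_ictr_indep kz ky kw (z z' y w : tensor g) (O : fn) :
  alt_form O -> homog kz z -> homog kz z' -> homog ky y -> homog kw w ->
  ictr z O =1 ictr z' O -> d (ictr y O) =1 ictr w O ->
  lieD br D z kz (ictr y O) =1 lieD br D z' kz (ictr y O).
Proof.
move=> hO hz hz' hy hw /funE zz' /funE dy zs; rewrite /lieD dy.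
rewrite (_ : ictr z (ictr y O) = ictr z' (ictr y O)).
  by rewrite !(ictr_comm _ hz' hw hO) !(ictr_comm _ hz hw hO) zz'.
by apply: funE => ys; rewrite (ictr_comm _ hz hy hO) (ictr_comm _ hz' hy hO) zz'.
Qed.

Section Bracket.
Variables (k1 k2 : nat) (x1 x2 y1 y2 : tensor g) (O F1 F2 : fn).
Hypotheses (hO : alt_form O) (hF1 : alt_form F1) (hF2 : alt_form F2).
Hypotheses (hx1 : homog k1 x1) (hx2 : homog k2 x2).
Hypotheses (hy1 : homog k1.+1 y1) (hy2 : homog k2.+1 y2).
Hypotheses (dO : d O =1 (fun _ => 0)).
Hypotheses (hX1 : ictr x1 O =1 d F1) (hX2 : ictr x2 O =1 d F2).
Hypotheses (hY1 : ictr y1 O =1 F1) (hY2 : ictr y2 O =1 F2).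

Lemma pbr_indep (x1' x2' : tensor g) : homog k1 x1' -> homog k2 x2' ->
  ictr x1' O =1 d F1 -> ictr x2' O =1 d F2 ->
  pbr br D x1' k1 x2' k2 F1 F2 =1 pbr br D x1 k1 x2 k2 F1 F2.
Proof.
move=> hx1' hx2' hX1' hX2' zs.
have dY1 : d (ictr y1 O) =1 ictr x1 O by move=> ys; rewrite (funE hY1) hX1.
have dY2 : d (ictr y2 O) =1 ictr x2 O by move=> ys; rewrite (funE hY2) hX2.
rewrite /pbr -(funE hY1) -(funE hY2).
rewrite (lieD_ictr_indep hO hx1' hx1 hy2 hx2 _ dY2); last by move=> ys; rewrite hX1' hX1.
by rewrite (lieD_ictr_indep hO hx2' hx2 hy1 hx1 _ dY1) // => ys; rewrite hX2' hX2.
Qed.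

Lemma pbr_poisson_constraint :
  ictr (tcomb (schouten br D x2 y1) (- psign A k1 k2) (schouten br D x1 y2)) O =1
  pbr br D x1 k1 x2 k2 F1 F2.
Proof.
move=> zs; rewrite ictr_tcomb (cartan_schouten _ hx2 hy1 hO) (cartan_schouten _ hx1 hy2 hO).
rewrite -(funE hY1) -(funE hY2) !(lieD_hamiltonian _ hF1 dO hX1) !(lieD_hamiltonian _ hF2 dO hX2).
rewrite !ictr0 /pbr /psign mulnC !sign_oddE; case: (odd _); ring.
Qed.

Lemma pbr_hamiltonian :
  ictr (tcomb (schouten br D x2 x1) (- psign A k1 k2) (schouten br D x1 x2)) O =1
  d (pbr br D x1 k1 x2 k2 F1 F2).
Proof.
move=> zs; rewrite /pbr deRD deRN /psign deR_sign ictr_tcomb.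
rewrite (cartan_schouten _ hx2 hx1 hO) (cartan_schouten _ hx1 hx2 hO).
rewrite (funE hX1) (funE hX2) !(lieD_hamiltonian _ hF1 dO hX1) !(lieD_hamiltonian _ hF2 dO hX2).
rewrite !ictr0 !lieD_deR // !sign_oddE !oddM /=.
by case: (odd k1); case: (odd k2); rewrite /=; ring.
Qed.

End Bracket.

End CartanCalculus.

Theorem mainTheorem7 (R : realType) (A : comAlgType R) (g : lmodType A)
  (br : g -> g -> g) (D : g -> A -> A) (n : nat) (om : cotensor g) :
  (* n-plectic structure *)
  lie_rinehart br D -> torsionless g ->
  homog n.+1 om -> deR br D (cot_eval om) =1 (fun _ => 0) ->
  forall (m1 m2 k1 k2 : nat) (f1 f2 : cotensor g) (x1 x2 y1 y2 : tensor g),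
  (* f_i homogeneous of degree m_i, Hamilton tensors x_i of degree n - m_i,
     Poisson constraints y_i of degree n + 1 - m_i *)
  (k1 + m1)%N = n -> (k2 + m2)%N = n ->
  homog m1 f1 -> homog m2 f2 ->
  homog k1 x1 -> homog k2 x2 -> homog k1.+1 y1 -> homog k2.+1 y2 ->
  ictr x1 (cot_eval om) =1 deR br D (cot_eval f1) ->
  ictr x2 (cot_eval om) =1 deR br D (cot_eval f2) ->
  ictr y1 (cot_eval om) =1 cot_eval f1 ->
  ictr y2 (cot_eval om) =1 cot_eval f2 ->
  let B := pbr br D x1 k1 x2 k2 (cot_eval f1) (cot_eval f2) in
  [/\ (* {f1,f2} is (the functional of) a cotensor *)
      exists c : cotensor g, cot_eval c =1 B,
      (* independence of the choice of Hamilton tensors *)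
      forall x1' x2' : tensor g, homog k1 x1' -> homog k2 x2' ->
        ictr x1' (cot_eval om) =1 deR br D (cot_eval f1) ->
        ictr x2' (cot_eval om) =1 deR br D (cot_eval f2) ->
        pbr br D x1' k1 x2' k2 (cot_eval f1) (cot_eval f2) =1 B,
      (* Poisson constraint of {f1,f2} *)
      ictr (tcomb (schouten br D x2 y1) (- psign A k1 k2) (schouten br D x1 y2))
           (cot_eval om) =1 B
    & (* Hamilton tensor of {f1,f2} *)
      ictr (tcomb (schouten br D x2 x1) (- psign A k1 k2) (schouten br D x1 x2))
           (cot_eval om) =1 deR br D B].
Proof.
move=> LR _ _ dO m1 m2 k1 k2 f1 f2 x1 x2 y1 y2 _ _ _ _ hx1 hx2 hy1 hy2 hX1 hX2 hY1 hY2 B.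
have hO := alt_form_cot_eval om.
have hF1 := alt_form_cot_eval f1; have hF2 := alt_form_cot_eval f2.
have constraint := pbr_poisson_constraint LR hO hF1 hF2 hx1 hx2 hy1 hy2 dO hX1 hX2 hY1 hY2.
split.
- have [c hc] := ictr_cot_eval
    (tcomb (schouten br D x2 y1) (- psign A k1 k2) (schouten br D x1 y2)) om.
  by exists c => zs; rewrite hc constraint.
- move=> x1' x2' hx1' hx2' hX1' hX2'.
  exact: (pbr_indep hO hx1 hx2 hy1 hy2 hX1 hX2 hY1 hY2 hx1' hx2' hX1' hX2').
- exact: constraint.
exact: (pbr_hamiltonian LR hO hF1 hF2 hx1 hx2 dO hX1 hX2).
Qed.
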